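(* Let $V$ be a real vector space, $R:V\to\mathbb{R}\cup\{+\infty\}$ and $f:\mathbb{R}^m\to\mathbb{R}\cup\{+\infty\}$ convex, $\Phi:V\to\mathbb{R}^m$ linear, and let $p$ be a minimizer of $R+f\circ\Phi$ with finite minimal value $M=R(p)+f(\Phi p)$. Let $\mathrm{epi}(R)=\{(u,r)\in V\times\mathbb{R}: R(u)\le r\}$ and $\mathrm{hypo}(M-f\circ\Phi)=\{(u,r)\in V\times\mathbb{R}: M-f(\Phi u)\ge r\}$; the point $(p,R(p))$ lies in both. Let $\vec E$ and $\vec H$ be the linear subspaces of $V\times\mathbb{R}$ parallel to the affine hulls of $F((p,R(p)),\mathrm{epi}(R))$ and $F((p,R(p)),\mathrm{hypo}(M-f\circ\Phi))$ respectively. Then $\mathrm{codim}_{V\times\mathbb{R}}(\vec E+\vec H)\ge 1$. If moreover both faces $F((p,R(p)),\mathrm{epi}(R))$ and $F((p,R(p)),\mathrm{hypo}(M-f\circ\Phi))$ are horizontal and ($R(p)>\inf_V R$ or $f(\Phi p)>\inf_V f\circ\Phi$), then $\mathrm{codim}_{V\times\mathbb{R}}(\vec E+\vec H)\ge 2$.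
   Context: For a convex set $C$, a face is a convex subset $F\subseteq C$ such that every open segment $]x,y[=\{tx+(1-t)y:0<t<1\}$ ($x\neq y$) contained in $C$ which intersects $F$ is contained in $F$; $F(x,C)$ denotes the intersection of all faces of $C$ containing $x$. For a convex set $C\subseteq V\times\mathbb{R}$ and $(x,r)\in C$, the face $F((x,r),C)$ is horizontal if its affine hull is contained in $V\times\{r\}$, and oblique otherwise. *)

(* The base field is an arbitrary real field R (realFieldType);
   this contains the case of the real numbers. *)
From HB Require Import structures.
From mathcomp Require Import all_boot all_order all_algebra.
Set Implicit Arguments. Unset Strict Implicit. Unset Printing Implicit Defensive.
Import Order.TTheory GRing.Theory Num.Theory.
Local Open Scope ring_scope.

Section Defs.
Variable R : realFieldType.

(* Extended values R ∪ {+oo}: [Some r] is the finite value r, [None] is +oo. *)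
Definition ele (x y : option R) : bool :=
  match x, y with
  | _, None => true
  | None, Some _ => false
  | Some a, Some b => a <= b
  end.

Definition convex_fun (W : lmodType R) (g : W -> option R) : Prop :=
  forall (x y : W) (t rx ry : R), 0 <= t -> t <= 1 ->
    g x = Some rx -> g y = Some ry ->
    ele (g (t *: x + (1 - t) *: y)) (Some (t * rx + (1 - t) * ry)).

Variable W : lmodType R.

Definition convex_set (C : W -> Prop) : Prop :=
  forall (x y : W) (t : R), C x -> C y -> 0 <= t -> t <= 1 ->
    C (t *: x + (1 - t) *: y).

Definition segpt (x y : W) (t : R) : W := t *: x + (1 - t) *: y.

Definition is_face (C F : W -> Prop) : Prop :=
  (forall z, F z -> C z) /\ convex_set F /\
  forall x y : W, x <> y ->
    (forall t : R, 0 < t -> t < 1 -> C (segpt x y t)) ->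
    (exists t : R, [/\ 0 < t, t < 1 & F (segpt x y t)]) ->
    (forall t : R, 0 < t -> t < 1 -> F (segpt x y t)).

Definition minface (x : W) (C : W -> Prop) : W -> Prop :=
  fun z => forall F, is_face C F -> F x -> F z.

Definition aff_hull (S : W -> Prop) : W -> Prop :=
  fun z => exists (n : nat) (s : 'I_n -> W) (l : 'I_n -> R),
    [/\ forall i, S (s i), \sum_i l i = 1 & z = \sum_i l i *: s i].

(* linear subspace parallel to the affine hull of S (S nonempty) *)
Definition dir (S : W -> Prop) : W -> Prop :=
  fun z => exists a b, [/\ aff_hull S a, aff_hull S b & z = a - b].

Definition sum_sub (U1 U2 : W -> Prop) : W -> Prop :=
  fun z => exists u1 u2, [/\ U1 u1, U2 u2 & z = u1 + u2].

(* codim_W U >= k, i.e. dim (W / U) >= k: there are k vectors whose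
   classes modulo U are linearly independent. *)
Definition codim_ge (U : W -> Prop) (k : nat) : Prop :=
  exists w : 'I_k -> W,
    forall c : 'I_k -> R, U (\sum_i c i *: w i) -> forall i, c i = 0.

End Defs.

Section Graphs.
Variables (R : realFieldType) (V : lmodType R).

Definition epi (g : V -> option R) : V * R^o -> Prop :=
  fun z => ele (g z.1) (Some z.2).

(* hypo(M - g) = {(u,r) : M - g(u) >= r}  (M - (+oo) = -oo) *)
Definition hypo_sub (M : R) (g : V -> option R) : V * R^o -> Prop :=
  fun z => exists b, g z.1 = Some b /\ z.2 <= M - b.

Definition horizontal (r : R) (F : V * R^o -> Prop) : Prop :=
  forall z, aff_hull F z -> z.2 = r.
End Graphs.

(* A point z of a convex set C lies in the minimal face F(x, C) only if z - x
   is a two-sided direction of C at x, i.e. x +- s (z - x) stays in C for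
   small s >= 0: such points form a face of C containing x.  Hence every
   direction d1 of the face of epi(R) and d2 of the face of hypo(M - f o Phi)
   can be followed in both senses from (p, R p).  Since the hypograph lies
   below the epigraph (p minimizes R + f o Phi), following d1 in epi(R) and
   -d2 in the hypograph over a common base point forces the heights of d1 and
   d2 to cancel whenever their V-components do, so (0, 1) is not in the sum.
   If both faces are horizontal and, say, R u < R p, then a combination
   k (u - p, 0) with k > 0 in the sum would give a point where R drops
   strictly below R p by convexity while f o Phi stays at most f (Phi p),
   contradicting minimality; so (u - p, 0) is independent of (0, 1) modulo the
   sum. *)
From mathcomp Require Import all_boot all_order all_algebra.
From mathcomp Require Import ring lra.
Set Implicit Arguments. Unset Strict Implicit. Unset Printing Implicit Defensive.
Import Order.TTheory GRing.Theory Num.Theory.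
Local Open Scope ring_scope.

Section TwoSidedDirections.
Variables (R : realFieldType) (W : lmodType R).
Implicit Types (C : W -> Prop) (x y z w d : W).

Lemma segptD x y z (t : R) : segpt (x + y) (x + z) t = x + segpt y z t.
Proof. by rewrite /segpt !scalerDr addrACA -scalerDl [t + _]addrC subrK scale1r. Qed.

Lemma segptE y z (t : R) : segpt y z t = z + t *: (y - z).
Proof. by rewrite /segpt scalerBl scale1r scalerBr addrCA. Qed.

Lemma segpt_shift y z (t s : R) : segpt y z (t + s) = segpt y z t + s *: (y - z).
Proof. by rewrite !segptE -addrA -scalerDl. Qed.

Definition twosided C x d :=
  exists2 e : R, 0 < e & forall s, 0 <= s -> s <= e -> C (x + s *: d) /\ C (x - s *: d).

Lemma twosided_common (C1 C2 : W -> Prop) x1 x2 d1 d2 :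
  twosided C1 x1 d1 -> twosided C2 x2 d2 ->
  exists2 e : R, 0 < e & forall s, 0 <= s -> s <= e ->
    (C1 (x1 + s *: d1) /\ C1 (x1 - s *: d1)) /\ (C2 (x2 + s *: d2) /\ C2 (x2 - s *: d2)).
Proof.
case=> [e1 e1_gt0 H1] [e2 e2_gt0 H2]; exists (Num.min e1 e2); first by rewrite lt_min e1_gt0.
by move=> s s_ge0; rewrite le_min => /andP[se1 se2]; split; [exact: H1 | exact: H2].
Qed.

Lemma twosided_sub C C' x d :
  (forall z, C z -> C' z) -> twosided C x d -> twosided C' x d.
Proof. by move=> CC' [e e_gt0 H]; exists e => // s s0 se; case: (H s s0 se) => /CC' ? /CC'. Qed.

Lemma twosidedN C x d : twosided C x d -> twosided C x (- d).
Proof. by case=> e e_gt0 H; exists e => // s s0 se; rewrite scalerN opprK; case: (H s s0 se). Qed.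

Lemma twosided_open_segment C y z (t0 : R) :
  (forall t, 0 < t -> t < 1 -> C (segpt y z t)) -> 0 < t0 -> t0 < 1 ->
  twosided C (segpt y z t0) (y - z).
Proof.
move=> Cyz t0_gt0 t0_lt1.
have m_gt0 : 0 < Num.min t0 (1 - t0) by rewrite lt_min t0_gt0 subr_gt0.
have [m_le_t0 m_le_1t0] : Num.min t0 (1 - t0) <= t0 /\ Num.min t0 (1 - t0) <= 1 - t0.
  by rewrite !ge_min !lexx ?orbT.
exists (Num.min t0 (1 - t0) / 2) => [|s s0 se]; first by rewrite divr_gt0.
split.
- by have := Cyz (t0 + s); rewrite segpt_shift; apply; lra.
- by have := Cyz (t0 - s); rewrite segpt_shift scaleNr; apply; lra.
Qed.

Variables (C : W -> Prop) (x0 : W).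
Hypotheses (C_convex : convex_set C) (C_x0 : C x0).

Lemma convex_ray_le d (e s : R) :
  0 < e -> C (x0 + e *: d) -> 0 <= s -> s <= e -> C (x0 + s *: d).
Proof.
move=> e_gt0 Ce s0 se.
have := C_convex (t := s / e) Ce C_x0.
rewrite -[X in _ + _ *: X]addr0 -/(segpt _ _ _) segptD /segpt scaler0 addr0.
rewrite scalerA mulrVK ?unitfE ?gt_eqF //; apply; first by rewrite divr_ge0 // ltW.
by rewrite ler_pdivrMr // mul1r.
Qed.

Lemma twosided_of_ends d (e : R) :
  0 < e -> C (x0 + e *: d) -> C (x0 - e *: d) -> twosided C x0 d.
Proof.
move=> e_gt0 C1 C2; exists e => // s s0 se; split; first exact: (convex_ray_le e_gt0).
by rewrite -scalerN; apply: (convex_ray_le e_gt0) => //; rewrite scalerN.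
Qed.

Lemma twosided0 : twosided C x0 0.
Proof. by exists 1 => // s _ _; rewrite scaler0 addr0 subr0. Qed.

Lemma twosidedD d1 d2 : twosided C x0 d1 -> twosided C x0 d2 -> twosided C x0 (d1 + d2).
Proof.
move=> D1 D2; have [e e_gt0 He] := twosided_common D1 D2.
exists (e / 2) => [|s s0 se]; first by rewrite divr_gt0.
have s2_ge0 : 0 <= s * 2 by lra.
have s2_le : s * 2 <= e by rewrite -ler_pdivlMr.
have [[P1 N1] [P2 N2]] := He _ s2_ge0 s2_le.
have half_ge0 : (0 : R) <= 2^-1 by rewrite invr_ge0.
have half_le1 : (2 : R)^-1 <= 1 by rewrite invf_le1 //; lra.
have mid y1 y2 : segpt ((s * 2) *: y1) ((s * 2) *: y2) 2^-1 = s *: (y1 + y2).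
  by rewrite /segpt !scalerA scalerDr; congr (_ *: _ + _ *: _); field.
split; first by have := C_convex P1 P2 half_ge0 half_le1; rewrite -/(segpt _ _ _) segptD mid.
have := C_convex N1 N2 half_ge0 half_le1.
by rewrite -!scalerN -/(segpt _ _ _) segptD mid -opprD.
Qed.

Lemma twosidedZ (k : R) d : twosided C x0 d -> twosided C x0 (k *: d).
Proof.
move=> Dd.
have pos k' : 0 < k' -> twosided C x0 (k' *: d).
  move=> k'_gt0; case: Dd => e e_gt0 H; exists (e / k') => [|s s0 se]; first exact: divr_gt0.
  by rewrite scalerA; apply: H; [exact: mulr_ge0 (ltW _) | rewrite -ler_pdivlMr].
case: (ltrgtP k 0) => [k_lt0|k_gt0|->]; last by rewrite scale0r; exact: twosided0.
- by rewrite -[k]opprK scaleNr; apply/twosidedN/pos; rewrite oppr_gt0.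
- exact: pos.
Qed.

Lemma twosided_sum n (F : 'I_n -> W) :
  (forall i, twosided C x0 (F i)) -> twosided C x0 (\sum_i F i).
Proof.
by move=> H; apply: (big_ind (twosided C x0)) => //; [exact: twosided0 | exact: twosidedD].
Qed.

Lemma twosided_trans w d : twosided C x0 (w - x0) -> twosided C w d -> twosided C x0 d.
Proof.
case=> e e_gt0 /(_ e (ltW e_gt0) (lexx e)) [_ C_back].
case=> r r_gt0 /(_ r (ltW r_gt0) (lexx r)) [C1 C2].
pose l := e / (1 + e).
have l_ge0 : 0 <= l by rewrite divr_ge0 // ltW // ltr_wpDr // ltW.
have l_le1 : l <= 1 by rewrite ler_pdivrMr ?mul1r; lra.
(* the weight l cancels w - x0 against the backward point x0 - e (w - x0) *)
have cancel v : segpt (w - x0 + v) (- (e *: (w - x0))) l = l *: v.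
  rewrite /segpt scalerDr -scaleNr scalerA addrAC -scalerDl.
  have -> : l + (1 - l) * - e = 0 by rewrite /l; field; lra.
  by rewrite scale0r add0r.
have shift v : w + v = x0 + (w - x0 + v) by rewrite addrA [x0 + _]addrC subrK.
apply: (@twosided_of_ends _ (l * r)); first by rewrite mulr_gt0 // divr_gt0 //; lra.
- have := C_convex C1 C_back l_ge0 l_le1.
  by rewrite -/(segpt _ _ _) (shift (r *: d)) segptD cancel scalerA.
- have := C_convex C2 C_back l_ge0 l_le1.
  by rewrite -/(segpt _ _ _) (shift (- (r *: d))) segptD cancel scalerN scalerA.
Qed.

Definition twosided_face : W -> Prop := fun z => C z /\ twosided C x0 (z - x0).

Lemma twosided_face_convex : convex_set twosided_face.
Proof.
move=> y z t [Cy Dy] [Cz Dz] t0 t1; split; first exact: C_convex.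
rewrite -/(segpt y z t).
have -> : segpt y z t - x0 = segpt (y - x0) (z - x0) t.
  by have := segptD x0 (y - x0) (z - x0) t; rewrite !(addrC x0) !subrK => ->; rewrite addrK.
by apply: twosidedD; apply: twosidedZ.
Qed.

Lemma twosided_face_is_face : is_face C twosided_face.
Proof.
split; first by move=> z [].
split; first exact: twosided_face_convex.
move=> y z _ Cyz [t0 [t0_gt0 t0_lt1 [_ Dw]]] t t_gt0 t_lt1; split; first exact: Cyz.
have Dyz := twosided_trans Dw (twosided_open_segment Cyz t0_gt0 t0_lt1).
have -> : segpt y z t - x0 = (t - t0) *: (y - z) + (segpt y z t0 - x0).
  by rewrite -{1}(subrKC t0 t) segpt_shift addrAC addrC.
by apply: twosidedD => //; apply: twosidedZ.
Qed.

Lemma twosided_aff_hull S :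
  (forall z, S z -> twosided C x0 (z - x0)) ->
  forall z, aff_hull S z -> twosided C x0 (z - x0).
Proof.
move=> DS z [n [s [l [Ss sum_l ->]]]].
have -> : \sum_i l i *: s i - x0 = \sum_i l i *: (s i - x0).
  by under [RHS]eq_bigr do rewrite scalerBr; rewrite sumrB -scaler_suml sum_l scale1r.
by apply: twosided_sum => i; apply/twosidedZ/DS.
Qed.

Lemma twosided_dir_minface z : dir (minface x0 C) z -> twosided C x0 z.
Proof.
have face_x0 : twosided_face x0 by split; rewrite // subrr; exact: twosided0.
have Dmin y : minface x0 C y -> twosided C x0 (y - x0).
  by move/(_ _ twosided_face_is_face face_x0) => [].
move=> [y1 [y2 [/(twosided_aff_hull Dmin) D1 /(twosided_aff_hull Dmin) D2 ->]]].
have -> : y1 - y2 = (y1 - x0) + - (y2 - x0) by rewrite opprB addrA subrK.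
exact/twosidedD/twosidedN.
Qed.

End TwoSidedDirections.

Section ConvexFunctions.
Variables (R : realFieldType) (V : lmodType R).
Implicit Types (g h : V -> option R).

Lemma ele_SomeP (o : option R) r : ele o (Some r) -> exists2 r', o = Some r' & r' <= r.
Proof. by case: o => [r'|] //= r'_le; exists r'. Qed.

Lemma scale_regular (s : R) (x : R^o) : s *: x = s * x.
Proof. by []. Qed.

Lemma convex_fun_linear_comp (U : lmodType R) (f : U -> option R) (Phi : {linear V -> U}) :
  convex_fun f -> convex_fun (fun v => f (Phi v)).
Proof. by move=> f_convex x y t rx ry t0 t1 fx fy; rewrite linearD !linearZ; apply: f_convex. Qed.

Lemma convex_epi g : convex_fun g -> convex_set (epi g).
Proof.
move=> g_convex [x1 r1] [x2 r2] t /ele_SomeP [a1 g1 le1] /ele_SomeP [a2 g2 le2] t0 t1.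
have := g_convex x1 x2 t a1 a2 t0 t1 g1 g2; rewrite /epi /=.
case: (g _) => [r|] //= r_le; rewrite !scale_regular.
have : t * a1 <= t * r1 by rewrite ler_wpM2l.
have : (1 - t) * a2 <= (1 - t) * r2 by rewrite ler_wpM2l // subr_ge0.
lra.
Qed.

Lemma convex_hypo_sub (M : R) g : convex_fun g -> convex_set (hypo_sub M g).
Proof.
move=> g_convex [x1 r1] [x2 r2] t [a1 [g1 le1]] [a2 [g2 le2]] t0 t1.
have := g_convex x1 x2 t a1 a2 t0 t1 g1 g2; rewrite /hypo_sub /=.
case: (g _) => [r|] //= r_le; exists r; split => //; rewrite !scale_regular.
have : t * r1 <= t * (M - a1) by rewrite ler_wpM2l.
have : (1 - t) * r2 <= (1 - t) * (M - a2) by rewrite ler_wpM2l // subr_ge0.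
lra.
Qed.

Definition sublevel g (c : R) : V -> Prop := fun v => ele (g v) (Some c).

(* p + t (k (u - p) - y) is the midpoint of p - 2t y and p + 2t k (u - p). *)
Lemma convex_strict_descent h (p u y : V) (c c' k e : R) :
  convex_fun h -> h p = Some c -> h u = Some c' -> c' < c -> 0 < k -> 0 < e ->
  (forall s, 0 <= s -> s <= e -> sublevel h c (p - s *: y)) ->
  exists2 t, 0 < t /\ t <= e & exists2 r, h (p + t *: (k *: (u - p) - y)) = Some r & r < c.
Proof.
move=> h_convex hp hu c'_lt_c k_gt0 e_gt0 hy.
pose s := Num.min e k^-1.
have s_gt0 : 0 < s by rewrite lt_min e_gt0 invr_gt0.
have s_le_e : s <= e by rewrite ge_min lexx.
have sk_le1 : s * k <= 1 by rewrite -ler_pdivlMr // mul1r ge_min lexx orbT.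
have sk_ge0 : 0 <= s * k by rewrite mulr_ge0 // ltW.
clearbody s.
have [r1 h1 r1_le] := ele_SomeP (hy s (ltW s_gt0) s_le_e).
have := h_convex u p (s * k) c' c sk_ge0 sk_le1 hu hp.
rewrite -/(segpt _ _ _) segptE; case h2 : (h _) => [r2|] //= r2_le.
have half_ge0 : (0 : R) <= 2^-1 by rewrite invr_ge0.
have half_le1 : (2 : R)^-1 <= 1 by rewrite invf_le1 //; lra.
have := h_convex _ _ _ r1 r2 half_ge0 half_le1 h1 h2; rewrite -/(segpt _ _ _).
have -> : segpt (p - s *: y) (p + (s * k) *: (u - p)) 2^-1 = p + (s / 2) *: (k *: (u - p) - y).
  rewrite segptD /segpt scalerN !scalerA; congr (_ + _).
  by rewrite [in RHS]scalerBr [in RHS]scalerA [in RHS]addrC; congr (- (_ *: _) + _ *: _); field.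
case hr : (h _) => [r|] //= r_le; exists (s / 2); first by split; lra.
exists r => //.
have : 0 < s * k * (c - c') by rewrite !pmulr_rgt0 ?subr_gt0.
lra.
Qed.

Lemma hypo_sub_sublevel g (a b : R) v : hypo_sub (a + b) g (v, a) -> sublevel g b v.
Proof. by case=> b' [/= gv le]; rewrite /sublevel gv /=; lra. Qed.

Lemma dir_horizontal (r : R) (F : V * R^o -> Prop) z : horizontal r F -> dir F z -> z.2 = 0.
Proof. by move=> hF [z1 [z2 [/hF h1 /hF h2 ->]]]; rewrite /= h1 h2 subrr. Qed.

Lemma twosided_horizontal (C : V * R^o -> Prop) x (r : R) d :
  twosided C (x, r) d -> d.2 = 0 -> twosided (fun v => C (v, r)) x d.1.
Proof.
case: d => d1 d2 [e e_gt0 H] /= d2_0; exists e => // s s0 se.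
have E (v : V) (sg : R) : (x, r) + sg *: (v, 0 : R^o) = (x + sg *: v, r).
  by apply/pair_equal_spec; split => /=; rewrite ?scaler0 ?addr0.
by have := H s s0 se; rewrite d2_0 -!scaleNr !E.
Qed.

Section MinimumOfSum.
Variables (g1 g2 : V -> option R) (p : V) (a b : R).
Hypothesis p_min : forall u a' b', g1 u = Some a' -> g2 u = Some b' -> a + b <= a' + b'.

Lemma hypo_sub_below_epi (z1 z2 : V * R^o) :
  epi g1 z1 -> hypo_sub (a + b) g2 z2 -> z1.1 = z2.1 -> z2.2 <= z1.2.
Proof.
case: z1 z2 => [v1 r1] [v2 r2] /ele_SomeP [a1 g1v le1] [b1 [g2v le2]] /= v12.
rewrite /= -v12 in g1v le1 g2v le2; have := p_min g1v g2v; lra.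
Qed.

Lemma twosided_epi_hypo_sub (d1 d2 : V * R^o) :
  twosided (epi g1) (p, a) d1 -> twosided (hypo_sub (a + b) g2) (p, a) d2 ->
  d1.1 + d2.1 = 0 -> d1.2 + d2.2 = 0.
Proof.
move=> D1 D2 sum1.
have [e e_gt0 /(_ e (ltW e_gt0) (lexx e)) [[P1 N1] [P2 N2]]] := twosided_common D1 D2.
have opp : d2.1 = - d1.1 by apply/eqP; rewrite -addr_eq0 addrC sum1.
have := hypo_sub_below_epi P1 N2; have := hypo_sub_below_epi N1 P2.
rewrite /= opp scalerN opprK !scale_regular => /(_ erefl) le1 /(_ erefl) le2.
have /eqP : e * (d1.2 + d2.2) = 0 by rewrite mulrDr; lra.
by rewrite mulf_eq0 gt_eqF //= => /eqP.
Qed.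

Lemma codim_ge1_epi_hypo_sub (U1 U2 : V * R^o -> Prop) :
  (forall z, U1 z -> twosided (epi g1) (p, a) z) ->
  (forall z, U2 z -> twosided (hypo_sub (a + b) g2) (p, a) z) ->
  codim_ge (sum_sub U1 U2) 1.
Proof.
move=> DU1 DU2; exists (fun=> (0, 1)) => c [d1 [d2 [/DU1 D1 /DU2 D2 sum]]] i.
rewrite big_ord1 in sum; rewrite (ord1 i).
have /= := congr1 fst sum; rewrite scaler0 => /esym sum1.
have /= := congr1 snd sum; rewrite scale_regular mulr1 => ->.
exact: twosided_epi_hypo_sub D1 D2 sum1.
Qed.

Hypotheses (g1_convex : convex_fun g1) (g1p : g1 p = Some a).

Lemma sublevel_twosided_sum_gt0 (u : V) (a' k : R) (y1 y2 : V) :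
  g1 u = Some a' -> a' < a ->
  twosided (sublevel g1 a) p y1 -> twosided (sublevel g2 b) p y2 ->
  y1 + y2 = k *: (u - p) -> 0 < k -> False.
Proof.
move=> g1u a'_lt_a D1 D2 sum k_gt0.
have [e e_gt0 He] := twosided_common D1 D2.
have [t [t_gt0 t_le_e] [r g1r r_lt_a]] :=
  convex_strict_descent g1_convex g1p g1u a'_lt_a k_gt0 e_gt0 (fun s s0 se => (He s s0 se).1.2).
rewrite -sum [y1 + y2]addrC addrK in g1r.
have [b1 g2b1 b1_le] := ele_SomeP (He t (ltW t_gt0) t_le_e).2.1.
by have := p_min g1r g2b1; lra.
Qed.

Lemma sublevel_twosided_sum_eq0 (u : V) (a' k : R) (y1 y2 : V) :
  g1 u = Some a' -> a' < a ->
  twosided (sublevel g1 a) p y1 -> twosided (sublevel g2 b) p y2 ->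
  y1 + y2 = k *: (u - p) -> k = 0.
Proof.
move=> g1u a'_lt_a D1 D2 sum; case: (ltrgtP k 0) => // [k_lt0 | k_gt0]; exfalso.
- apply: (sublevel_twosided_sum_gt0 (k := - k) g1u a'_lt_a (twosidedN D1) (twosidedN D2)).
    by rewrite -opprD sum scaleNr.
  by rewrite oppr_gt0.
- exact: (sublevel_twosided_sum_gt0 g1u a'_lt_a D1 D2 sum).
Qed.

End MinimumOfSum.

Lemma codim_ge2_sublevel (g1 g2 : V -> option R) (p : V) (a b : R) (U1 U2 : V * R^o -> Prop) :
  convex_fun g1 -> convex_fun g2 -> g1 p = Some a -> g2 p = Some b ->
  (forall u a' b', g1 u = Some a' -> g2 u = Some b' -> a + b <= a' + b') ->
  (forall z, U1 z -> z.2 = 0 /\ twosided (sublevel g1 a) p z.1) ->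
  (forall z, U2 z -> z.2 = 0 /\ twosided (sublevel g2 b) p z.1) ->
  (exists u a', g1 u = Some a' /\ a' < a) \/ (exists u b', g2 u = Some b' /\ b' < b) ->
  codim_ge (sum_sub U1 U2) 2.
Proof.
move=> g1_convex g2_convex g1p g2p p_min DU1 DU2 descent.
have [u u_free] : exists u, forall (k : R) y1 y2,
    twosided (sublevel g1 a) p y1 -> twosided (sublevel g2 b) p y2 ->
    y1 + y2 = k *: (u - p) -> k = 0.
  case: descent => [[u [a' [g1u a'_lt]]] | [u [b' [g2u b'_lt]]]]; exists u => k y1 y2 D1 D2 sum.
  - exact: (sublevel_twosided_sum_eq0 p_min g1_convex g1p g1u a'_lt D1 D2 sum).
  - apply: (sublevel_twosided_sum_eq0 _ g2_convex g2p g2u b'_lt D2 D1); last by rewrite addrC.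
    by move=> v b1 a1 g2v g1v; rewrite addrC [b1 + _]addrC; exact: p_min g1v g2v.
exists (fun i : 'I_2 => if val i == 0%N then (0, 1) else (u - p, 0)).
move=> c [d1 [d2 [/DU1 [d1_0 D1] /DU2 [d2_0 D2] sum]]].
rewrite big_ord_recl big_ord1 /= in sum.
have c0 : c ord0 = 0.
  by have /= := congr1 snd sum; rewrite d1_0 d2_0 !scale_regular mulr1 mulr0 !addr0.
have c1 : c (lift ord0 ord0) = 0.
  have /= := congr1 fst sum; rewrite scaler0 add0r => /esym sum1.
  exact: u_free D1 D2 sum1.
by case=> [[|[|//]] i_lt]; [rewrite -c0 | rewrite -c1]; congr c; apply: val_inj.
Qed.
End ConvexFunctions.

Theorem mainTheorem4 (R : realFieldType) (V : lmodType R) (m : nat)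
    (Rf : V -> option R) (f : 'rV[R]_m -> option R)
    (Phi : {linear V -> 'rV[R]_m}) (p : V) (a b : R) :
  convex_fun Rf -> convex_fun f ->
  Rf p = Some a -> f (Phi p) = Some b ->
  (forall (u : V) (a' b' : R), Rf u = Some a' -> f (Phi u) = Some b' ->
     a + b <= a' + b') ->
  let M := a + b in
  let pt : V * R^o := (p, a) in
  let E := minface pt (epi Rf) in
  let H := minface pt (hypo_sub M (fun u => f (Phi u))) in
  codim_ge (sum_sub (dir E) (dir H)) 1 /\
  (horizontal a E -> horizontal a H ->
   ((exists (u : V) (a' : R), Rf u = Some a' /\ a' < a) \/
    (exists (u : V) (b' : R), f (Phi u) = Some b' /\ b' < b)) ->
   codim_ge (sum_sub (dir E) (dir H)) 2).
Proof.
move=> Rf_convex f_convex Rfp fp p_min M pt E H.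
set g := fun u => f (Phi u).
have g_convex : convex_fun g := convex_fun_linear_comp (Phi := Phi) f_convex.
have DE z : dir E z -> twosided (epi Rf) pt z.
  by apply: twosided_dir_minface; [exact: convex_epi | rewrite /epi /= Rfp /=].
have DH z : dir H z -> twosided (hypo_sub M g) pt z.
  by apply: twosided_dir_minface; [exact: convex_hypo_sub | exists b; rewrite /= /M addrK].
split; first exact: (codim_ge1_epi_hypo_sub p_min DE DH).
move=> hE hH descent.
apply: (codim_ge2_sublevel Rf_convex g_convex Rfp fp p_min _ _ descent) => z Dz.
- have z2_0 := dir_horizontal hE Dz; split => //.
  exact: twosided_horizontal (DE _ Dz) z2_0.
- have z2_0 := dir_horizontal hH Dz; split => //.
  apply: twosided_sub (twosided_horizontal (DH _ Dz) z2_0) => v.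
  exact: hypo_sub_sublevel.
Qed.
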